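(* Let $N\ge1$ and let $\lambda$ be a partition with $l(\lambda)\le N$. Then in $\mathbb Q(q,t)$: $$\frac{c_\lambda(q,t)}{\prod_{s\in\lambda}\bigl(1-q^{a'(s)}t^{N-l'(s)}\bigr)}=\frac{c_{\overline\lambda}(q,t)}{\prod_{s\in\overline\lambda}\bigl(1-q^{a'(s)}t^{N-l'(s)}\bigr)},\qquad \frac{c'_\lambda(q,t)}{\prod_{s\in\lambda}\bigl(1-q^{a'(s)+1}t^{N-1-l'(s)}\bigr)}=\frac{c'_{\overline\lambda}(q,t)}{\prod_{s\in\overline\lambda}\bigl(1-q^{a'(s)+1}t^{N-1-l'(s)}\bigr)},$$ where arm/leg quantities in products over $\overline\lambda$ are computed in $\overline\lambda$.
   Context: Partitions $\lambda=(\lambda_1\ge\lambda_2\ge\cdots)$ are identified with Young diagrams $\{(i,j): i\ge1,\ 1\le j\le\lambda_i\}$; $\lambda^t$ is the transpose, $l(\lambda)$ the number of nonzero parts. For a box $s=(i,j)\in\lambda$: arm $a(s)=\lambda_i-j$, leg $l(s)=\lambda^t_j-i$, arm-colength $a'(s)=j-1$, leg-colength $l'(s)=i-1$. Set $c_\lambda(q,t)=\prod_{s\in\lambda}(1-q^{a(s)}t^{l(s)+1})$, $c'_\lambda(q,t)=\prod_{s\in\lambda}(1-q^{a(s)+1}t^{l(s)})$. For $l(\lambda)\le N$, $\overline{\lambda}=(\lambda_1-\lambda_N,\dots,\lambda_{N-1}-\lambda_N)$ (remove all columns of height $N$). (Note the denominators are never identically zero for $l(\lambda)\le N$, as $l'(s)\le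 N-1$.) *)

(* Q(q,t) is the fraction field of {poly {poly rat}}:
   q = the inner variable (constant polynomial 'X%:P), t = the outer variable 'X. *)
From HB Require Import structures.
From mathcomp Require Import all_boot all_order all_algebra.
Set Implicit Arguments. Unset Strict Implicit. Unset Printing Implicit Defensive.
Import Order.TTheory GRing.Theory Num.Theory.
Local Open Scope ring_scope.

Definition is_partition (la : seq nat) : bool :=
  sorted geq la && all (fun x => 0 < x)%N la.

Definition lenp (la : seq nat) : nat := count (fun x => 0 < x)%N la.

(* Boxes are indexed 0-based: row i (paper row i+1), column j (paper column j+1),
   with i < size la and j < nth 0 la i. Zero parts contribute no boxes. *)
(* transpose: la^t_{j+1} = number of rows of length > j *)
Definition conjp (la : seq nat) (j : nat) : nat := count (fun x => j < x)%N la.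
Definition arm  (la : seq nat) (i j : nat) : nat := (nth 0 la i - j.+1)%N.
Definition leg  (la : seq nat) (i j : nat) : nat := (conjp la j - i.+1)%N.
Definition armco (i j : nat) : nat := j.   (* a'(s) = paper column - 1 *)
Definition legco (i j : nat) : nat := i.   (* l'(s) = paper row - 1 *)

Definition QT := {fraction {poly {poly rat}}}.
Definition qv : QT := tofrac (('X : {poly rat})%:P).
Definition tv : QT := tofrac ('X : {poly {poly rat}}).

Definition boxprod (la : seq nat) (F : nat -> nat -> QT) : QT :=
  \prod_(i < size la) \prod_(j < nth 0 la i) F i j.

Definition c_la (la : seq nat) : QT :=
  boxprod la (fun i j => 1 - qv ^+ arm la i j * tv ^+ (leg la i j).+1).
Definition c'_la (la : seq nat) : QT :=
  boxprod la (fun i j => 1 - qv ^+ (arm la i j).+1 * tv ^+ leg la i j).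

Definition labar (N : nat) (la : seq nat) : seq nat :=
  [seq (x - nth 0 la N.-1)%N | x <- take N.-1 la].

Definition den1 (N : nat) (la : seq nat) : QT :=
  boxprod la (fun i j => 1 - qv ^+ armco i j * tv ^+ (N - legco i j)).
Definition den2 (N : nat) (la : seq nat) : QT :=
  boxprod la (fun i j => 1 - qv ^+ (armco i j).+1 * tv ^+ (N - 1 - legco i j)).

From HB Require Import structures.
From mathcomp Require Import all_boot all_order all_algebra.
From mathcomp Require Import ring zify.
Import GRing.Theory.
Local Open Scope ring_scope.

(* Put m = la_N.  Every row i < N of la has length at least m,
   so the first m columns of la are full columns of height N, and removing
   them gives labar.  A box (i, j) with j >= m has the same arm and leg in la
   as the box (i, j - m) in labar; a box (i, j) with j < m has leg N-1-i and
   arm la_i-1-j, so its numerator factor coincides with the denominator factor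
   of the box (i, la_i-1-j), one of the last m columns of row i.  Hence, row by
   row, numerator(la) * denominator(labar) = numerator(labar) * denominator(la). *)

Lemma boxprod_nat (la : seq nat) (F : nat -> nat -> QT) (n : nat) :
  (size la <= n)%N ->
  boxprod la F = \prod_(0 <= i < n) \prod_(0 <= j < nth 0 la i) F i j.
Proof.
move=> la_n.
transitivity (\prod_(0 <= i < size la) \prod_(0 <= j < nth 0 la i) F i j).
  by rewrite /boxprod big_mkord; apply: eq_bigr => i _; rewrite big_mkord.
rewrite (big_cat_nat (n := size la) (leq0n _) la_n) /=.
rewrite [X in _ * X]big1_seq ?mulr1 // => i /andP[_].
by rewrite mem_index_iota => /andP[i_ge _]; rewrite nth_default // big_geq.
Qed.

Lemma prod_row_shift (R : comPzRingType) (m L : nat) (Fla Fbar g : nat -> R) :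
  (m <= L)%N ->
  (forall j, (m <= j < L)%N -> Fla j = Fbar (j - m)%N) ->
  (forall j, (j < m)%N -> Fla j = g (L - j.+1)%N) ->
  \prod_(0 <= j < L) Fla j * \prod_(0 <= j < L - m) g j =
  \prod_(0 <= j < L - m) Fbar j * \prod_(0 <= j < L) g j.
Proof.
move=> m_L shifted reflected.
rewrite (big_cat_nat (n := m) (leq0n m) m_L) /=.
rewrite [in RHS](big_cat_nat (n := L - m) (leq0n (L - m)) (leq_subr m L)) /=.
have -> : \prod_(m <= j < L) Fla j = \prod_(0 <= j < L - m) Fbar j.
  rewrite -{1}(add0n m) big_addn; apply: eq_big_nat => j /andP[_ j_lt].
  by rewrite shifted ?addnK //; apply/andP; split; lia.
have -> : \prod_(0 <= j < m) Fla j = \prod_(L - m <= j < L) g j.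
  rewrite -{1}(add0n (L - m)%N) big_addn big_nat_rev /= subKn //.
  by apply: eq_big_nat => j /andP[_ j_lt]; rewrite reflected; [congr g|]; lia.
ring.
Qed.

(* The factors 1 - q^a t^b with (a, b) <> (0, 0) are nonzero in Q(q,t):
   their constant term is 1. *)
Lemma factor_neq0 (a b : nat) : (0 < a + b)%N -> 1 - qv ^+ a * tv ^+ b != 0.
Proof.
move=> ab_gt0.
have -> : 1 - qv ^+ a * tv ^+ b =
          tofrac (1 - ('X : {poly rat})%:P ^+ a * ('X : {poly {poly rat}}) ^+ b).
  by rewrite tofracB tofracM !tofracXn tofrac1.
rewrite tofrac_eq0; apply/negP => /eqP/(congr1 (fun p => p.[0].[0])).
rewrite /= !hornerE.
by case: a b ab_gt0 => [|a] [|b] //= _; rewrite ?expr0n /= ?mulr0 ?mul0r subr0;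
  move/eqP; rewrite oner_eq0.
Qed.

(* For l(la) <= N every leg-colength is at most N-1, so den1 never vanishes. *)
Lemma den1_neq0 (N : nat) (la : seq nat) : (size la <= N)%N -> den1 N la != 0.
Proof.
move=> la_N; apply/prodf_neq0 => i _; apply/prodf_neq0 => j _.
by apply: factor_neq0; rewrite /legco; have := ltn_ord i; lia.
Qed.

(* The factors of den2 always carry a positive power of q. *)
Lemma den2_neq0 (N : nat) (la : seq nat) : den2 N la != 0.
Proof. by apply/prodf_neq0 => i _; apply/prodf_neq0 => j _; apply: factor_neq0. Qed.

Lemma size_labar (N : nat) (la : seq nat) : (size (labar N la) <= N)%N.
Proof. by rewrite size_map size_take; case: ifP; lia. Qed.

Section LaBar.

Variables (N : nat) (la : seq nat).
Hypothesis N_gt0 : (1 <= N)%N.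
Hypothesis la_partition : is_partition la.
Hypothesis la_length : (lenp la <= N)%N.

Local Notation m := (nth 0%N la N.-1).
Local Notation lb := (labar N la).

(* All entries of la are positive parts, so l(la) is the length of la. *)
Lemma size_la : (size la <= N)%N.
Proof.
case/andP: la_partition => _; rewrite all_count => /eqP <-.
exact: la_length.
Qed.

Lemma part_ge_last (i : nat) : (i < N)%N -> (m <= nth 0 la i)%N.
Proof.
move=> i_N; case: (ltnP N.-1 (size la)) => [N_size|]; last first.
  by move=> size_le; rewrite (nth_default 0 size_le).
have la_sorted : sorted geq la by case/andP: la_partition.
have geq_trans : transitive geq by move=> a b c ba cb; apply: leq_trans cb ba.
by apply: (sorted_leq_nth geq_trans leqnn 0 la_sorted); rewrite ?inE; lia.
Qed.

Lemma nth_labar (i : nat) : (i < N)%N -> nth 0 lb i = (nth 0 la i - m)%N.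
Proof.
move=> i_N; case: (ltnP i (size (take N.-1 la))) => i_size.
  rewrite (nth_map 0) // nth_take //.
  by move: i_size; rewrite size_take; case: ifP; lia.
rewrite nth_default ?size_map //.
move: i_size; rewrite size_take; case: ifP => [_ i_ge|_ /(nth_default 0) -> //].
have -> : i = N.-1 by lia.
by rewrite subnn.
Qed.

Lemma conjp_full (j : nat) : (j < m)%N -> conjp la j = N.
Proof.
move=> j_m.
have N_size : (N.-1 < size la)%N.
  by rewrite ltnNge; apply/negP => size_le; move: j_m; rewrite nth_default.
have size_eq : size la = N by have := size_la; lia.
rewrite -size_eq; apply/eqP; rewrite /conjp -all_count; apply/allP => x.
case/(nthP 0%N) => k k_size <-.
have k_N : (k < N)%N by rewrite -size_eq.
exact: leq_trans j_m (part_ge_last _ k_N).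
Qed.

Lemma conjp_labar (j : nat) : (m <= j)%N -> conjp la j = conjp lb (j - m).
Proof.
move=> m_j; rewrite /conjp count_map -{1}(cat_take_drop N.-1 la) count_cat.
have -> : count (fun x => (j < x)%N) (drop N.-1 la) = 0%N.
  apply/eqP; rewrite -leqn0 leqNgt -has_count; apply/hasP => -[x].
  case/(nthP 0%N) => k; rewrite size_drop nth_drop => k_lt <-.
  (* restate with size at type nat, so that lia identifies it with size la *)
  have {}k_lt : (k < size la - N.-1)%N := k_lt.
  have -> : k = 0%N by have := size_la; lia.
  by rewrite addn0 ltnNge m_j.
by rewrite addn0; apply: eq_count => x /=; lia.
Qed.

(* The row-by-row cancellation, for any numerator factors h(arm, leg) and
   denominator factors g(a', l') that agree on the full columns. *)
Lemma boxprod_labar_cross (h g : nat -> nat -> QT) :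
  (forall a i, (i < N)%N -> h a (N - 1 - i)%N = g a i) ->
  boxprod la (fun i j => h (arm la i j) (leg la i j)) * boxprod lb (fun i j => g j i) =
  boxprod lb (fun i j => h (arm lb i j) (leg lb i j)) * boxprod la (fun i j => g j i).
Proof.
move=> h_g.
rewrite !(boxprod_nat _ _ _ size_la) !(boxprod_nat _ _ _ (size_labar N la)) -!big_split /=.
apply: eq_big_nat => i /andP[_ i_N]; rewrite nth_labar //.
apply: prod_row_shift (part_ge_last _ i_N) _ _ => j.
  move=> /andP[m_j j_lt]; rewrite /arm /leg nth_labar // conjp_labar //.
  by congr h; lia.
by move=> j_m; rewrite /arm /leg conjp_full // -h_g //; congr h; lia.
Qed.

End LaBar.

Theorem lemma2p4 (N : nat) (la : seq nat) :
  (1 <= N)%N -> is_partition la -> (lenp la <= N)%N ->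
  c_la la / den1 N la = c_la (labar N la) / den1 N (labar N la) /\
  c'_la la / den2 N la = c'_la (labar N la) / den2 N (labar N la).
Proof.
move=> N_gt0 la_part la_len.
have cross := boxprod_labar_cross N la N_gt0 la_part la_len.
split; apply/eqP.
  have size_le := size_la N la la_part la_len.
  rewrite eqr_div ?(den1_neq0 size_le) ?den1_neq0 ?size_labar //.
  apply/eqP/(cross (fun a l => 1 - qv ^+ a * tv ^+ l.+1)
                   (fun a i => 1 - qv ^+ a * tv ^+ (N - i))) => a i i_N.
  by congr (1 - _ * tv ^+ _); lia.
rewrite eqr_div ?den2_neq0 //.
by apply/eqP/(cross (fun a l => 1 - qv ^+ a.+1 * tv ^+ l)
                    (fun a i => 1 - qv ^+ a.+1 * tv ^+ (N - 1 - i))).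
Qed.
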